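(* Let $G=(V,E)$ be a simple, unoriented, locally finite graph with graph distance $d$, and let $x\neq x'$ be two vertices of $G$ at finite distance, each of positive degree. For $t\in[0,1]$ let $K^t$ denote the set of couplings between the lazy random walk measures $\mu^t_x$ and $\mu^t_{x'}$, viewed as nonnegative real matrices indexed by $B_x\times B_{x'}$, and let $E_{xx'}$ be the matrix of this size whose only nonzero entry is a $1$ at position $(x,x')$. Then there exists $t_0>0$ such that for all $s,t\in(0,t_0]$, $$K^{s}-E_{xx'}=\frac{s}{t}\,\bigl(K^t-E_{xx'}\bigr),$$ i.e. $K^s$ and $K^t$ are homothetic with center $E_{xx'}$ and ratio $s/t$.
   Context: For a vertex $x$, $S_x=\{y\in V: y\sim x\}$ is the set of neighbours of $x$, $d_x=|S_x|$ its degree, and $B_x=\{x\}\cup S_x$. The graph distance $d(x,x')$ is the length of a shortest edge path from $x$ to $x'$. The lazy random walk is the probability measure $\mu^t_x$ on $V$ with $\mu^t_x(x)=1-t$, $\mu^t_x(y)=t/d_x$ for $y\in S_x$, and $\mu^t_x(y)=0$ otherwise. A coupling between probability measures $\mu,\mu'$ on $V$ is a nonnegative function $\xi$ on $V\times V$ with $\sum_{y'}\xi(y,y')=\mu(y)$ for all $y$ and $\sum_y\xi(y,y')=\mu'(y')$ for all $y'$; a coupling between $\mu^t_x$ and $\mu^t_{x'}$ vanishes outside $B_x\times B_{x'}$ and is identified with its restriction to $B_x\times B_{x'}$. *)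

From mathcomp Require Import all_boot all_order all_algebra.
Set Implicit Arguments. Unset Strict Implicit. Unset Printing Implicit Defensive.
Import Order.TTheory GRing.Theory Num.Theory.
Local Open Scope ring_scope.

(* A simple, unoriented, locally finite graph on vertex type V is given by
   finite adjacency lists [nbrs x] = S_x (duplicate-free), with y ~ x iff
   y \in nbrs x; simplicity/unorientedness are hypotheses of the theorem. *)

Section Graph.
Variables (V : eqType) (nbrs : V -> seq V).

Definition adj : rel V := fun x y => y \in nbrs x.

Definition deg (x : V) : nat := size (nbrs x).

Definition ball (x : V) : seq V := x :: nbrs x.

Definition finite_dist (x x' : V) : Prop :=
  exists p : seq V, path adj x p && (last x p == x').

Variable R : realFieldType.

Definition lazy_rw (t : R) (x y : V) : R :=
  if y == x then 1 - t
  else if y \in nbrs x then t / (deg x)%:R else 0.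

(* couplings between mu^t_x and mu^t_x', as functions on V x V vanishing
   outside B_x x B_x' (identified with matrices indexed by B_x x B_x') *)
Definition coupling (t : R) (x x' : V) (xi : V -> V -> R) : Prop :=
  [/\ forall y y', 0 <= xi y y',
      forall y y', ~~ ((y \in ball x) && (y' \in ball x')) -> xi y y' = 0,
      forall y, y \in ball x -> \sum_(y' <- ball x') xi y y' = lazy_rw t x y
    & forall y', y' \in ball x' -> \sum_(y <- ball x) xi y y' = lazy_rw t x' y'].

Definition Emat (x x' : V) : V -> V -> R :=
  fun y y' => if (y == x) && (y' == x') then 1 else 0.

End Graph.

From mathcomp Require Import all_boot all_order all_algebra.
From mathcomp Require Import ring lra.
Set Implicit Arguments. Unset Strict Implicit. Unset Printing Implicit Defensive.
Import Order.TTheory GRing.Theory Num.Theory.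
Local Open Scope ring_scope.

(* The marginals are affine in t with centre the Dirac mass:
   mu^b - delta_x = (b/a) (mu^a - delta_x).  Hence the homothety of centre
   E_{xx'} and ratio b/a maps matrices with the marginals of K^a to matrices
   with the marginals of K^b, and it keeps every entry off (x,x') nonnegative.
   The entry at (x,x') of a coupling in K^a is at least 1 - 2a (row x has mass
   1 - a, of which at most a lies over S_x'), so for a, b <= 1/2 it stays
   nonnegative as well, and the homothety is a bijection K^a -> K^b. *)

Section Homothety.
Variables (V : eqType) (nbrs : V -> seq V) (R : realFieldType).
Hypothesis nbrs_irr : forall x, x \notin nbrs x.

Lemma lazy_rw_homothety (a b : R) (x y : V) : a != 0 ->
  lazy_rw nbrs b x y - (y == x)%:R = b / a * (lazy_rw nbrs a x y - (y == x)%:R).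
Proof.
move=> a0; rewrite /lazy_rw; case: (y == x) => /=; first by field.
by case: (y \in nbrs x); rewrite /= ?subr0 ?mulr0 // mulrA divfK.
Qed.

Lemma sum_lazy_rw_nbrs (a : R) (x : V) : (0 < deg nbrs x)%N ->
  \sum_(y <- nbrs x) lazy_rw nbrs a x y = a.
Proof.
move=> dx; have dx0 : (deg nbrs x)%:R != 0 :> R by rewrite pnatr_eq0 -lt0n.
rewrite big_seq (eq_bigr (fun=> a / (deg nbrs x)%:R)) => [|y xy]; last first.
  by rewrite /lazy_rw xy; case: eqP xy => [->|//]; rewrite (negbTE (nbrs_irr x)).
by rewrite -big_seq big_const_seq count_predT iter_addr_0 -[_ *+ _]mulr_natr divfK.
Qed.

Variables x x' : V.

Lemma sum_Emat_row (y : V) :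
  \sum_(y' <- ball nbrs x') Emat R x x' y y' = (y == x)%:R.
Proof.
rewrite big_cons big_seq big1 ?addr0 => [|y' xy'].
  by rewrite /Emat eqxx andbT; case: (y == x).
by rewrite /Emat; case: (y' =P x') xy' => [->|]; rewrite ?(negbTE (nbrs_irr x')) ?andbF.
Qed.

Lemma sum_Emat_col (y' : V) :
  \sum_(y <- ball nbrs x) Emat R x x' y y' = (y' == x')%:R.
Proof.
rewrite big_cons big_seq big1 ?addr0 => [|y xy].
  by rewrite /Emat eqxx; case: (y' == x').
by rewrite /Emat; case: (y =P x) xy => [->|]; rewrite ?(negbTE (nbrs_irr x)).
Qed.

Lemma coupling_corner_lb (a : R) (xi : V -> V -> R) : (0 < deg nbrs x')%N ->
  coupling nbrs a x x' xi -> 1 - 2 * a <= xi x x'.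
Proof.
move=> dx' [xi_ge0 _ row col].
have := row x (mem_head _ _); rewrite big_cons /lazy_rw eqxx => row_x.
have rest_le : \sum_(y' <- nbrs x') xi x y' <= a.
  rewrite -(sum_lazy_rw_nbrs a dx') big_seq [leRHS]big_seq.
  apply: ler_sum => y' xy'.
  rewrite -(col y') ?inE ?xy' ?orbT // big_cons lerDl.
  by apply: sumr_ge0 => y _.
lra.
Qed.

Definition homothety (c : R) (xi : V -> V -> R) : V -> V -> R :=
  fun y y' => Emat R x x' y y' + c * (xi y y' - Emat R x x' y y').

Lemma homothetyB (c : R) xi y y' :
  homothety c xi y y' - Emat R x x' y y' = c * (xi y y' - Emat R x x' y y').
Proof. by rewrite /homothety addrC addKr. Qed.

Lemma coupling_homothety (a b : R) xi : 0 < a -> 0 < b ->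
  coupling nbrs a x x' xi -> 0 <= homothety (b / a) xi x x' ->
  coupling nbrs b x x' (homothety (b / a) xi).
Proof.
move=> a0 b0 [xi_ge0 xi_supp row col].
rewrite {1}/homothety /Emat !eqxx /= => corner_ge0.
have ba_ge0 : 0 <= b / a by rewrite divr_ge0 // ltW.
have a_neq0 : a != 0 by rewrite gt_eqF.
split.
- move=> y y'; rewrite /homothety /Emat.
  case: (y =P x) => [->|_]; case: (y' =P x') => [->|_] //=;
    by rewrite subr0 add0r mulr_ge0.
- move=> y y' out; rewrite /homothety xi_supp // /Emat.
  case: (y =P x) out => [->|_]; case: (y' =P x') => [->|_] //=;
    by rewrite ?mem_head // subrr mulr0 addr0.
- move=> y xy; rewrite big_split /= -mulr_sumr sumrB sum_Emat_row row //.
  by rewrite -(lazy_rw_homothety _ _ _ a_neq0) addrC subrK.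
- move=> y' xy'; rewrite big_split /= -mulr_sumr sumrB sum_Emat_col col //.
  by rewrite -(lazy_rw_homothety _ _ _ a_neq0) addrC subrK.
Qed.

Lemma coupling_homothety_small (a b : R) xi : (0 < deg nbrs x')%N ->
  0 < a -> 0 < b <= 1 / 2 ->
  coupling nbrs a x x' xi -> coupling nbrs b x x' (homothety (b / a) xi).
Proof.
move=> dx' a0 /andP[b0 b_le] K; apply: coupling_homothety => //.
have corner := coupling_corner_lb dx' K.
have -> : homothety (b / a) xi x x'
          = 1 - 2 * b + b / a * (xi x x' - (1 - 2 * a)).
  by rewrite /homothety /Emat !eqxx /=; field; rewrite gt_eqF.
by apply: addr_ge0; [lra | apply: mulr_ge0; [rewrite divr_ge0 // ltW | lra]].
Qed.

End Homothety.

Theorem lemma1 (V : eqType) (nbrs : V -> seq V) (R : realFieldType)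
  (nbrs_uniq : forall x, uniq (nbrs x))
  (nbrs_sym : forall x y, (y \in nbrs x) = (x \in nbrs y))
  (nbrs_irr : forall x, x \notin nbrs x)
  (x x' : V) (hxx' : x != x') (hdist : finite_dist nbrs x x')
  (hdx : (0 < deg nbrs x)%N) (hdx' : (0 < deg nbrs x')%N) :
  exists t0 : R, 0 < t0 <= 1 /\
    forall s t : R, 0 < s <= t0 -> 0 < t <= t0 ->
      (* K^s - E_{xx'} = (s/t) (K^t - E_{xx'}) as sets of matrices *)
      (forall xi, coupling nbrs s x x' xi ->
         exists zeta, coupling nbrs t x x' zeta /\
           forall y y', xi y y' - Emat R x x' y y'
                        = s / t * (zeta y y' - Emat R x x' y y')) /\
      (forall zeta, coupling nbrs t x x' zeta ->
         exists xi, coupling nbrs s x x' xi /\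
           forall y y', xi y y' - Emat R x x' y y'
                        = s / t * (zeta y y' - Emat R x x' y y')).
Proof.
exists (1 / 2); split; first by apply/andP; split; lra.
move=> s t /andP[s0 s_le] /andP[t0 t_le].
have st_ts : s / t * (t / s) = 1 by rewrite mulrA divfK ?divff ?gt_eqF.
split=> [xi K | zeta K].
- exists (homothety x x' (t / s) xi); split.
    by apply: coupling_homothety_small; rewrite ?t0.
  by move=> y y'; rewrite homothetyB mulrA st_ts mul1r.
- exists (homothety x x' (s / t) zeta); split.
    by apply: coupling_homothety_small; rewrite ?s0.
  by move=> y y'; rewrite homothetyB.
Qed.
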